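(* Let $G$ and $H$ be finite abelian groups, written additively, of the same even order $k$, and let $f:G\to H$ be semi-planar. Suppose $S(G,H;f)$ splits into two substructures $S_1$ and $S_2$ with $\mathcal{L}(0,0)\in S_1$. Then there is a subgroup $B$ of $H$ of index $2$ such that either (i) for all $a\in G$, $b\in H$: $\mathcal{L}(a,b)\in S_1$ if and only if $b\in B$; or (ii) there is a subgroup $A$ of $G$ of index $2$ such that, for any $g\in G\setminus A$ and $h\in H\setminus B$, and all $a\in G$, $b\in H$: $\mathcal{L}(a,b)\in S_1$ if and only if ($a\in A$ and $b\in B$) or ($a\in A+g$ and $b\in B+h$).
   Context: A function $f:G\to H$ is semi-planar if for every non-identity $a\in G$ and every $y\in H$, the equation $f(x+a)-f(x)=y$ has either $0$ or $2$ solutions $x\in G$. The incidence structure $S(G,H;f)$ has points $(x,y)\in G\times H$ and lines $\mathcal{L}(a,b)$ for $(a,b)\in G\times H$, with $(x,y)$ incident with $\mathcal{L}(a,b)$ iff $y=f(x-a)+b$. Its incidence graph is the bipartite graph on points and lines with an edge for each incident pair. $S(G,H;f)$ splits into two substructures $S_1,S_2$ if its incidence graph has exactly two connected components; $S_1,S_2$ are the incidence structures formed by the points and lines of the two components, and $\mathcal{L}(a,b)\in S_i$ means the line lies in component $S_i$. *)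

From mathcomp Require Import all_boot all_order all_algebra.
Set Implicit Arguments. Unset Strict Implicit. Unset Printing Implicit Defensive.
Import GRing.Theory.
Local Open Scope ring_scope.

Definition semi_planar (G H : finZmodType) (f : G -> H) : Prop :=
  forall (a : G) (y : H), a != 0 ->
    let n := #|[set x : G | f (x + a) - f x == y]| in
    (n == 0%N) || (n == 2%N).

Definition is_subgroup (G : finZmodType) (A : {set G}) : Prop :=
  0 \in A /\ forall x y, x \in A -> y \in A -> x - y \in A.

Definition index2 (G : finZmodType) (A : {set G}) : Prop :=
  #|G| = (2 * #|A|)%N.

Definition coset_add (G : finZmodType) (A : {set G}) (g : G) : {set G} :=
  [set a + g | a in A].

(* Vertices of the incidence graph of S(G,H;f): inl (x,y) is the point (x,y),
   inr (a,b) is the line L(a,b). *)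
Definition vertex (G H : finZmodType) := ((G * H) + (G * H))%type.

Definition incident (G H : finZmodType) (f : G -> H) (p l : G * H) : bool :=
  p.2 == f (p.1 - l.1) + l.2.

Definition incid_rel (G H : finZmodType) (f : G -> H) : rel (vertex G H) :=
  fun u v => match u, v with
             | inl p, inr l => incident f p l
             | inr l, inl p => incident f p l
             | _, _ => false
             end.

Definition splits_in_two (G H : finZmodType) (f : G -> H) : Prop :=
  n_comp (incid_rel f) predT = 2%N.

Definition in_S1 (G H : finZmodType) (f : G -> H) (a : G) (b : H) : Prop :=
  connect (incid_rel f) (inr (0, 0)) (inr (a, b)).

From mathcomp Require Import all_boot all_order all_algebra.
Import GRing.Theory.
Set Implicit Arguments. Unset Strict Implicit.
Local Open Scope ring_scope.

(** Translations of G x H preserve incidence, so L(a,b) and L(c,d) lie in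
  the same component iff L(c - a, d - b) lies in S1.  With exactly two
  components this makes membership in S1 a homomorphism G x H -> Z/2, so
  L(a,b) is in S1 iff (a \in A) = (b \in B), where A and B are the kernels
  of its restrictions to G and H.  B is proper: every column {L(a,_)} meets
  S1 (through the point (0, f 0) of L(0,0)) while some line is outside S1,
  and the difference of two such lines in one column is a line L(0,h)
  outside S1. *)

Section TwoComponents.

Variables (T : finType) (e : rel T).
Hypotheses (e_sym : symmetric e) (two_comp : n_comp e predT = 2%N).

Let e_csym : connect_sym e := sym_connect_sym e_sym.
Let card_roots : #|predI (fingraph.roots e) (mem predT)| = 2%N := two_comp.

Lemma connect_two_comp3 x y z :
  [|| connect e x y, connect e x z | connect e y z].
Proof.
apply: contraT; rewrite !negb_or => /and3P [nxy nxz nyz].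
pose R := fingraph.root e x |: (fingraph.root e y |: [set fingraph.root e z]).
have R_roots : R \subset predI (fingraph.roots e) (mem predT).
  apply/subsetP => r; rewrite !inE andbT.
  by case/or3P=> /eqP ->; apply: fingraph.roots_root.
have := subset_leq_card R_roots; rewrite card_roots /R.
rewrite !cardsU1 cards1 !inE !(root_connect e_csym).
by rewrite (negbTE nxy) (negbTE nxz) (negbTE nyz).
Qed.

Lemma exists_not_connect x : exists y, ~~ connect e x y.
Proof.
apply/existsP; apply: contraT; rewrite negb_exists => /forallP all_xy.
have roots1 :
    predI (fingraph.roots e) (mem predT) \subset pred1 (fingraph.root e x).
  apply/subsetP => r; rewrite !inE /= => /andP [/eqP r_root _].
  move: (all_xy r); rewrite negbK => /(fingraph.rootP e_csym) ->.
  by rewrite r_root.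
by have := subset_leq_card roots1; rewrite card1 card_roots.
Qed.

Lemma connect_two_comp z x y : connect e x y = (connect e z x == connect e z y).
Proof.
case zx: (connect e z x); case zy: (connect e z y) => /=.
- by apply: connect_trans zy; rewrite e_csym.
- by apply: contraFF zy => /(connect_trans zx).
- by apply: contraFF zx => xy; apply: connect_trans zy _; rewrite e_csym.
- have := connect_two_comp3 x y z.
  by rewrite (e_csym x z) zx (e_csym y z) zy !orbF.
Qed.

End TwoComponents.

Lemma connect_homo (T : finType) (e : rel T) (h : T -> T) :
  {homo h : x y / e x y} -> {homo h : x y / connect e x y}.
Proof.
move=> h_e x y /connectP [p].
elim: p x => [|z p IHp] x /=; first by move=> _ ->.
by case/andP=> /h_e exz /IHp pz /pz; apply: connect_trans (connect1 exz).
Qed.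

(* X is the kernel of a homomorphism K -> Z/2: on bool, == is the addition
   of Z/2 with true as zero. *)
Definition Z2_kernel (K : finZmodType) (X : {set K}) :=
  forall x y, (x - y \in X) = ((x \in X) == (y \in X)).

Section Z2Kernel.

Variables (K : finZmodType) (X : {set K}).
Hypothesis X_ker : Z2_kernel X.

Lemma Z2_kernel0 : 0 \in X.
Proof. by rewrite -(subrr 0) X_ker eqxx. Qed.

Lemma Z2_kernelN x : (- x \in X) = (x \in X).
Proof. by rewrite -sub0r X_ker Z2_kernel0 eq_sym; case: (x \in X). Qed.

Lemma Z2_kernel_subgroup : is_subgroup X.
Proof. by split=> [|x y xX yX]; rewrite ?Z2_kernel0 // X_ker xX yX. Qed.

Lemma Z2_kernel_subr_notin g x : g \notin X -> (x - g \in X) = (x \notin X).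
Proof. by rewrite X_ker => /negbTE ->; case: (x \in X). Qed.

Lemma Z2_kernel_index2 g : g \notin X -> index2 X.
Proof.
move=> gX; rewrite /index2 -(cardsC X) mul2n -addnn; congr (_ + _)%N.
have -> : ~: X = [set x - g | x in X].
  apply/setP => y; rewrite inE; apply/idP/imsetP => [yX | [x xX ->]].
    exists (y + g); last by rewrite addrK.
    by rewrite -[_ \in X]negbK -(Z2_kernel_subr_notin _ gX) addrK.
  by rewrite Z2_kernel_subr_notin // xX.
by rewrite card_imset //; apply: subIr.
Qed.

End Z2Kernel.

Lemma mem_coset_add (K : finZmodType) (X : {set K}) g x :
  (x \in coset_add X g) = (x - g \in X).
Proof.
apply/imsetP/idP => [[y yX ->] | xgX]; first by rewrite addrK.
by exists (x - g); rewrite ?subrK.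
Qed.

Section IncidenceGraph.

Variables (G H : finZmodType) (f : G -> H).

Local Notation e := (incid_rel f).

Lemma incid_rel_sym : symmetric e.
Proof. by move=> [p|l] [q|m]. Qed.

Definition translate (u : G * H) (w : vertex G H) : vertex G H :=
  match w with inl p => inl (p + u) | inr l => inr (l + u) end.

Lemma incid_rel_translate u : {homo translate u : x y / e x y}.
Proof.
move=> [[x y]|[a b]] [[x' y']|[a' b']] //=; rewrite /incident /= => /eqP ->;
by rewrite opprD addrACA subrr addr0 addrA.
Qed.

Definition S1_lines : {set G * H} := [set l | connect e (inr 0) (inr l)].

Lemma connect_lines l m : connect e (inr l) (inr m) = (m - l \in S1_lines).
Proof.
rewrite inE; apply/idP/idP => [lm | /(connect_homo (incid_rel_translate l))].
  by have := connect_homo (incid_rel_translate (- l)) lm; rewrite /= subrr.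
by rewrite /= add0r subrK.
Qed.

Lemma S1_lines_meet_column a : exists b, (a, b) \in S1_lines.
Proof.
exists (f 0 - f (- a)); rewrite inE.
apply: (connect_trans (y := inl (0, f 0))); apply: connect1.
  by rewrite /= /incident /= subrr addr0.
by rewrite /= /incident /= sub0r addrC subrK.
Qed.

Hypothesis two_comp : splits_in_two f.

Lemma mem_S1_lines_sub l m :
  (l - m \in S1_lines) = ((l \in S1_lines) == (m \in S1_lines)).
Proof.
rewrite -connect_lines (connect_two_comp incid_rel_sym two_comp (inr 0)).
by rewrite !inE eq_sym.
Qed.

Lemma exists_line_notin_S1 : exists l, l \notin S1_lines.
Proof.
have [[[x y]|l] not_conn] := exists_not_connect incid_rel_sym two_comp (inr 0).
  exists (0, y - f x); rewrite inE; apply: contra not_conn => conn.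
  apply: connect_trans conn (connect1 _).
  by rewrite /= /incident /= subr0 addrC subrK.
by exists l; rewrite inE.
Qed.

Definition S1_rows : {set G} := [set a | (a, 0) \in S1_lines].
Definition S1_cols : {set H} := [set b | (0, b) \in S1_lines].

Lemma S1_rows_Z2_kernel : Z2_kernel S1_rows.
Proof.
move=> a c; rewrite !(@in_set G) -mem_S1_lines_sub.
by rewrite -[_ - (c, 0)]/(a - c, 0 - 0) subr0.
Qed.

Lemma S1_cols_Z2_kernel : Z2_kernel S1_cols.
Proof.
move=> b d; rewrite !(@in_set H) -mem_S1_lines_sub.
by rewrite -[_ - (0, d)]/(0 - 0, b - d) subr0.
Qed.

Lemma mem_S1_lines a b :
  ((a, b) \in S1_lines) = ((a \in S1_rows) == (b \in S1_cols)).
Proof.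
have -> : (a, b) = (a, 0) - (0, - b).
  by rewrite -[RHS]/(a - 0, 0 - - b) subr0 sub0r opprK.
rewrite mem_S1_lines_sub (@in_set G) (@in_set H).
by have := Z2_kernelN S1_cols_Z2_kernel b; rewrite !(@in_set H) => ->.
Qed.

Lemma exists_col_notin_S1 : exists h, h \notin S1_cols.
Proof.
have [[u v] uv_notin] := exists_line_notin_S1.
have [b ub_in] := S1_lines_meet_column u.
exists (b - v); rewrite (@in_set H).
have := mem_S1_lines_sub (u, b) (u, v).
by rewrite -[(u, b) - _]/(u - u, b - v) subrr ub_in (negbTE uv_notin) => ->.
Qed.

End IncidenceGraph.

Theorem theorem4 (G H : finZmodType) (k : nat) (f : G -> H) :
  #|G| = k -> #|H| = k -> ~~ odd k ->
  semi_planar f ->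
  splits_in_two f ->
  exists B : {set H}, is_subgroup B /\ index2 B /\
    ((forall (a : G) (b : H), in_S1 f a b <-> b \in B) \/
     (exists A : {set G}, is_subgroup A /\ index2 A /\
        forall (g : G) (h : H), g \notin A -> h \notin B ->
          forall (a : G) (b : H),
            in_S1 f a b <->
            ((a \in A /\ b \in B) \/
             (a \in coset_add A g /\ b \in coset_add B h)))).
Proof.
move=> _ _ _ _ two_comp.
have A_ker := S1_rows_Z2_kernel two_comp.
have B_ker := S1_cols_Z2_kernel two_comp.
have in_S1E a b : in_S1 f a b = ((a \in S1_rows f) == (b \in S1_cols f)).
  by rewrite -mem_S1_lines // inE.
have [h0 h0_notin] := exists_col_notin_S1 two_comp.
exists (S1_cols f); split; first exact: Z2_kernel_subgroup B_ker.
split; first exact: (Z2_kernel_index2 B_ker h0_notin).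
case: (pickP [pred a | a \notin S1_rows f]) => [g0 /= g0_notin | all_rows].
  right; exists (S1_rows f); split; first exact: Z2_kernel_subgroup A_ker.
  split; first exact: (Z2_kernel_index2 A_ker g0_notin).
  move=> g h g_notin h_notin a b.
  rewrite in_S1E !mem_coset_add !Z2_kernel_subr_notin //.
  by case: (a \in _); case: (b \in _); intuition.
left=> a b; move/negbT/negPn: (all_rows a) => a_in.
by rewrite in_S1E a_in; case: (b \in _).
Qed.
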